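(* Every set $SQ$ of priority derivation steps of stack-queue type is specialisation independent: whenever $Ds_1,Ds_2\in SQ$ and $Ds_2$ is a lowering of $Ds_1$ by a p-goal $X$, then $Ds_2$ is a congruent lowering of $Ds_1$ by $X$. Consequently every complete set of stack-queue type is a specialisation independent scheduling rule.
   Context: A p-atom is a pair $a[p]$ of an atom $a$ and a rational priority $p$. A p-goal is a finite set of p-atoms with pairwise distinct priorities, regarded as a list ordered by increasing priority. Substitutions act on atoms and leave priorities unchanged. A clause is $h\leftarrow B$ with $h$ an atom and $B$ a p-goal. For p-goals with no common priority, $F+G=F\cup G$; $F|G$ denotes $F+G$ when all priorities of $F$ are smaller than those of $G$. A shifting $\underline{\pi}$ is a strictly increasing bijection $\mathbb{Q}\to\mathbb{Q}$ acting on priorities ($G\underline\pi$). Priority derivation step: for a p-goal $a|F$ ($a$ of least priority), clause $c=(h\leftarrow B)$, renaming $\xi$ with $var(a|F)\cap var(c\xi)=\emptyset$, idempotent relevant mgu $\theta$ of $a$ and $h\xi$, shifting $\underline{\pi}$ with $F$, $B\xi\underline{\pi}$ sharing no priority: $a|F\xrightarrow{c\xi,\theta}(F+B\xi\underline{\pi})\theta$. Lowering: for $c=(h\leftarrow B)$, a step $a\lambda\underline{\sigma}|(K\lambda\underline{\sigma}+X)\xrightarrow{c}(X+K\lambda\underline{\sigma}+B\xi''\underline{\theta}'')\alpha''$ is a lowering by $X$ of a step $a|K\xrightarrow{c}(K+B\xi'\underline{\theta}')\alpha'$ ($\lambda$ a substitution, $\underline\sigma$ a shifting); it is a congruent lowering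 by $X$ if some shifting $\underline{\rho}$ has $K\underline{\rho}=K\underline{\sigma}$ and $B\underline{\theta}'\underline{\rho}=B\underline{\theta}''$. Steps are (congruent) lowerings of each other if each is a (congruent) lowering of the other. A set $S$ of steps is complete if (i) whenever some step $G\xrightarrow{c}\cdot$ exists, some step $G\xrightarrow{c}\cdot$ lies in $S$, and (ii) $S$ contains every step that is a congruent lowering of each other with a step of $S$; deterministic if two steps of $S$ that are lowerings of each other are congruent lowerings of each other; specialisation independent as in the claim. A scheduling rule is a complete deterministic set; a specialisation independent scheduling rule is a complete specialisation independent set. Stack-queue type: a set $SQ$ of priority derivation steps is of stack-queue type if for every clause $c=(h\leftarrow B)$ there are p-goals $M_s,M_q$ with $B=M_s|M_q$ such that every step $a|K\xrightarrow{c\xi,\mu}R$ in $SQ$ satisfies $R=(M_s\xi\underline{\gamma}|K|M_q\xi\underline{\gamma})\mu$ for some shifting $\underline{\gamma}$. *)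

From mathcomp Require Import all_boot all_order all_algebra.
Set Implicit Arguments. Unset Strict Implicit. Unset Printing Implicit Defensive.
Import Order.TTheory GRing.Theory Num.Theory.
Local Open Scope ring_scope.

Inductive term : Type :=
| Var : nat -> term
| Fn  : nat -> seq term -> term.

Record atom : Type := Atom { apred : nat; aargs : seq term }.

Definition subst := nat -> term.

Fixpoint tsubst (s : subst) (t : term) : term :=
  match t with
  | Var x => s x
  | Fn f ts => Fn f (map (tsubst s) ts)
  end.

Definition asubst (s : subst) (a : atom) : atom :=
  Atom (apred a) (map (tsubst s) (aargs a)).

Fixpoint tvars (t : term) : seq nat :=
  match t with
  | Var x => [:: x]
  | Fn _ ts => flatten (map tvars ts)
  end.

Definition avars (a : atom) : seq nat := flatten (map tvars (aargs a)).

Definition renaming (xi : subst) : Prop :=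
  exists f : nat -> nat, (forall x, xi x = Var (f x)) /\ bijective f.

Definition unifier (th : subst) (a b : atom) : Prop := asubst th a = asubst th b.

Definition mgu (th : subst) (a b : atom) : Prop :=
  unifier th a b /\
  forall eta, unifier eta a b -> exists delta, forall x, eta x = tsubst delta (th x).

Definition idempotent (th : subst) : Prop :=
  forall x, tsubst th (th x) = th x.

Definition relevant (th : subst) (a b : atom) : Prop :=
  forall x, th x <> Var x ->
    (x \in avars a ++ avars b) /\
    (forall y, y \in tvars (th x) -> y \in avars a ++ avars b).

Definition patom := (atom * rat)%type.

(* a p-goal is represented as the list of its p-atoms ordered by strictly
   increasing priority (this representation is canonical) *)
Definition pgoal := seq patom.

Definition pgoal_wf (G : pgoal) : bool := sorted (fun p q : patom => p.2 < q.2) G.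

Definition prios (G : pgoal) : seq rat := map snd G.

Definition gvars (G : pgoal) : seq nat := flatten (map (fun p : patom => avars p.1) G).

Definition prio_disjoint (F G : pgoal) : Prop :=
  forall p, p \in prios F -> p \notin prios G.

(* F + G (meaningful when F, G have no common priority): merged list *)
Definition pplus (F G : pgoal) : pgoal :=
  sort (fun p q : patom => p.2 <= q.2) (F ++ G).

Definition gsubst (s : subst) (G : pgoal) : pgoal :=
  map (fun p : patom => (asubst s p.1, p.2)) G.

Record shifting : Type := Shifting {
  shf :> rat -> rat;
  shf_incr : forall x y : rat, x < y -> shf x < shf y;
  shf_bij : bijective shf }.

Definition gshift (pi : shifting) (G : pgoal) : pgoal :=
  map (fun p : patom => (p.1, pi p.2)) G.

(* F | G : F + G, all priorities of F smaller than those of G *)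
Definition pbar_ok (F G : pgoal) : Prop :=
  forall p q, p \in prios F -> q \in prios G -> p < q.

Record clause : Type := Clause {
  chead : atom;
  cbody : pgoal;
  cbody_wf : pgoal_wf cbody }.

Definition cvars_ren (xi : subst) (c : clause) : seq nat :=
  avars (asubst xi (chead c)) ++ gvars (gsubst xi (cbody c)).

(* A step  G --(c xi, theta)--> R  together with the shifting pi used. *)
Record step : Type := Step {
  s_goal : pgoal;
  s_clause : clause;
  s_ren : subst;
  s_mgu : subst;
  s_shift : shifting;
  s_res : pgoal }.

Definition is_step (Ds : step) : Prop :=
  let c := s_clause Ds in
  let xi := s_ren Ds in
  let th := s_mgu Ds in
  let pi := s_shift Ds in
  pgoal_wf (s_goal Ds) /\
  exists (a : patom) (F : pgoal),
    s_goal Ds = a :: F /\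
    renaming xi /\
    (forall x, x \in gvars (s_goal Ds) -> x \notin cvars_ren xi c) /\
    mgu th a.1 (asubst xi (chead c)) /\ idempotent th /\
    relevant th a.1 (asubst xi (chead c)) /\
    prio_disjoint F (gshift pi (gsubst xi (cbody c))) /\
    s_res Ds = gsubst th (pplus F (gshift pi (gsubst xi (cbody c)))).

Definition step_set (S : step -> Prop) : Prop := forall Ds, S Ds -> is_step Ds.

Definition lowering_wit (Ds1 Ds2 : step) (X : pgoal) (lam : subst) (sig : shifting)
    (a : patom) (K : pgoal) : Prop :=
  let c := s_clause Ds1 in
  let B := cbody c in
  let Klamsig := gshift sig (gsubst lam K) in
  is_step Ds1 /\ is_step Ds2 /\
  s_clause Ds2 = c /\
  s_goal Ds1 = a :: K /\
  pgoal_wf X /\ prio_disjoint Klamsig X /\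
  s_goal Ds2 = (asubst lam a.1, sig a.2) :: pplus Klamsig X /\
  s_res Ds1 = gsubst (s_mgu Ds1)
                (pplus K (gshift (s_shift Ds1) (gsubst (s_ren Ds1) B))) /\
  s_res Ds2 = gsubst (s_mgu Ds2)
                (pplus (pplus X Klamsig) (gshift (s_shift Ds2) (gsubst (s_ren Ds2) B))).

Definition lowering (Ds1 Ds2 : step) (X : pgoal) : Prop :=
  exists lam sig a K, lowering_wit Ds1 Ds2 X lam sig a K.

Definition congruent_lowering (Ds1 Ds2 : step) (X : pgoal) : Prop :=
  exists lam sig a K, lowering_wit Ds1 Ds2 X lam sig a K /\
    exists rho : shifting,
      gshift rho K = gshift sig K /\
      gshift rho (gshift (s_shift Ds1) (cbody (s_clause Ds1)))
        = gshift (s_shift Ds2) (cbody (s_clause Ds1)).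

Definition lowerings_each_other (Ds1 Ds2 : step) : Prop :=
  (exists X, lowering Ds1 Ds2 X) /\ (exists X, lowering Ds2 Ds1 X).

Definition congruent_lowerings_each_other (Ds1 Ds2 : step) : Prop :=
  (exists X, congruent_lowering Ds1 Ds2 X) /\ (exists X, congruent_lowering Ds2 Ds1 X).

Definition complete (S : step -> Prop) : Prop :=
  step_set S /\
  (forall (G : pgoal) (c : clause),
      (exists Ds, is_step Ds /\ s_goal Ds = G /\ s_clause Ds = c) ->
      exists Ds, S Ds /\ s_goal Ds = G /\ s_clause Ds = c) /\
  (forall Ds Ds', S Ds -> is_step Ds' -> congruent_lowerings_each_other Ds Ds' -> S Ds').

Definition deterministic (S : step -> Prop) : Prop :=
  forall Ds1 Ds2, S Ds1 -> S Ds2 ->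
    lowerings_each_other Ds1 Ds2 -> congruent_lowerings_each_other Ds1 Ds2.

Definition specialisation_independent (S : step -> Prop) : Prop :=
  forall Ds1 Ds2 X, S Ds1 -> S Ds2 -> lowering Ds1 Ds2 X -> congruent_lowering Ds1 Ds2 X.

Definition scheduling_rule (S : step -> Prop) : Prop := complete S /\ deterministic S.

Definition spec_indep_scheduling_rule (S : step -> Prop) : Prop :=
  complete S /\ specialisation_independent S.

Definition stack_queue_type (SQ : step -> Prop) : Prop :=
  step_set SQ /\
  forall c : clause, exists Ms Mq : pgoal,
    pbar_ok Ms Mq /\ cbody c = Ms ++ Mq /\
    forall Ds, SQ Ds -> s_clause Ds = c ->
      forall (a : patom) (K : pgoal), s_goal Ds = a :: K ->
      exists gam : shifting,
        let Msg := gshift gam (gsubst (s_ren Ds) Ms) in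
        let Mqg := gshift gam (gsubst (s_ren Ds) Mq) in
        pbar_ok Msg K /\ pbar_ok K Mqg /\ pbar_ok Msg Mqg /\
        s_res Ds = gsubst (s_mgu Ds) (Msg ++ K ++ Mqg).

From mathcomp Require Import all_boot all_order all_algebra.
From mathcomp Require Import ring lra.
Set Implicit Arguments. Unset Strict Implicit. Unset Printing Implicit Defensive.
Import Order.TTheory GRing.Theory Num.Theory.
Local Open Scope ring_scope.

(* In a stack-queue step the shifting of the body is pinned down on
   the body's priorities by the shape [Ms γ | K | Mq γ] of the result.  Hence in
   a step and in any lowering of it, the images of the priorities of [Ms], of the
   (shifted) priorities of [K] and of the priorities of [Mq] occur in the same
   relative order.  Any order-preserving correspondence between two finite sets
   of rationals extends to a shifting, and that shifting witnesses congruence. *)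

Definition bend (a b c x : rat) : rat :=
  if a <= x then x else if b <= x then c + (x - b) * ((a - c) / (a - b))
  else x + (c - b).

Lemma bend_incr a b c : b < a -> c < a ->
  {homo bend a b c : x y / x < y}.
Proof.
move=> lt_ba lt_ca x y xy; rewrite /bend; set k := (a - c) / (a - b).
have kp : 0 < k by apply: divr_gt0; lra.
have kk : (a - b) * k = a - c by rewrite /k mulrCA divff ?mulr1 //; lra.
case: ifP => hx; case: ifP => hy; try lra;
  (try case: ifP => hbx); (try case: ifP => hby); try nra.
Qed.

Lemma bendK a b c : b < a -> c < a -> cancel (bend a b c) (bend a c b).
Proof.
move=> lt_ba lt_ca x; rewrite /bend.
have kK : ((a - c) / (a - b)) * ((a - b) / (a - c)) = 1.
  by field; rewrite !subr_eq0 !gt_eqF.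
have kp : 0 < (a - c) / (a - b) by apply: divr_gt0; lra.
have kk : (a - b) * ((a - c) / (a - b)) = a - c by field; rewrite subr_eq0 gt_eqF.
move: kK kp kk; set k := (a - c) / (a - b); set k' := (a - b) / (a - c) => kK kp kk.
case: (lerP a x) => hx; first by rewrite hx.
case: (lerP b x) => hbx.
- have -> : (a <= c + (x - b) * k) = false by apply/negbTE; rewrite -ltNge; nra.
  have -> : (c <= c + (x - b) * k) = true by apply/idP; nra.
  rewrite addrAC subrr add0r -mulrA kK mulr1; lra.
- have -> : (a <= x + (c - b)) = false by apply/negbTE; rewrite -ltNge; lra.
  have -> : (c <= x + (c - b)) = false by apply/negbTE; rewrite -ltNge; lra.
  lra.
Qed.

Lemma bend_shifting a b c : b < a -> c < a ->
  exists h : shifting, (forall x, a <= x -> h x = x) /\ h b = c.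
Proof.
move=> lt_ba lt_ca.
have bij : bijective (bend a b c) by exists (bend a c b); apply: bendK.
exists (Shifting (bend_incr lt_ba lt_ca) bij); split => /=.
- by move=> x ax; rewrite /bend ax.
- by rewrite /bend leNgt lt_ba lexx /= subrr mul0r addr0.
Qed.

Lemma translation_shifting (t : rat) : exists h : shifting, forall x, h x = x + t.
Proof.
have incr x y : x < y -> x + t < y + t by rewrite ltrD2r.
have bij : bijective (fun x : rat => x + t).
  by exists (fun x => x - t) => x; rewrite ?addrK ?subrK.
by exists (Shifting incr bij).
Qed.

Lemma comp_shifting (f g : shifting) : exists h : shifting, forall x, h x = f (g x).
Proof.
have incr x y : x < y -> f (g x) < f (g y) by move=> xy; do 2 apply: shf_incr.
have bij : bijective (f \o g) by apply: bij_comp; apply: shf_bij.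
by exists (Shifting incr bij).
Qed.

Definition lt2 (p q : rat * rat) : bool := (p.1 < q.1) && (p.2 < q.2).

Lemma lt2_trans : transitive lt2.
Proof.
by move=> y x z /andP[a b] /andP[c d]; rewrite /lt2 (lt_trans a c) (lt_trans b d).
Qed.

(* Built from the right: the last point is reached by a translation, and each
   new leftmost point by a bend fixing everything from the next point on. *)
Lemma shifting_interpolates (s : seq (rat * rat)) : sorted lt2 s ->
  exists rho : shifting, forall p, p \in s -> rho p.1 = p.2.
Proof.
elim: s => [|p s IH] /=.
  by move=> _; have [h _] := translation_shifting 0; exists h.
case: s IH => [|q s] IH.
  move=> _; have [h Hh] := translation_shifting (p.2 - p.1); exists h => r.
  by rewrite inE => /eqP ->; rewrite Hh addrC subrK.
move=> /andP[/andP[lt_pq1 lt_pq2] sorted_qs].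
have [rho Hrho] := IH sorted_qs.
have q2_min r : r \in q :: s -> q.2 <= r.2.
  rewrite inE => /orP[/eqP -> // | rs].
  have /allP/(_ r rs)/andP[_ /ltW //] := order_path_min lt2_trans sorted_qs.
have rho_p1 : rho p.1 < q.2 by rewrite -(Hrho q) ?mem_head // shf_incr.
have [h [h_id h_p]] := bend_shifting rho_p1 lt_pq2.
have [f Hf] := comp_shifting h rho.
exists f => r; rewrite inE => /orP[/eqP -> | rs]; first by rewrite Hf h_p.
by rewrite Hf Hrho // h_id // q2_min.
Qed.

Lemma sorted_lt2_pairs (f g : rat -> rat) s :
  {homo f : x y / x < y} -> {homo g : x y / x < y} ->
  sorted <%R s -> sorted lt2 (map (fun q => (f q, g q)) s).
Proof.
move=> f_incr g_incr ss; rewrite sorted_map; apply: sub_sorted ss => x y xy.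
by rewrite /lt2 /= f_incr ?g_incr.
Qed.

Lemma sorted_cat3 (T : eqType) (r : rel T) (s1 s2 s3 : seq T) : transitive r ->
  sorted r s1 -> sorted r s2 -> sorted r s3 ->
  {in s1 & s2, forall x y, r x y} -> {in s2 & s3, forall x y, r x y} ->
  {in s1 & s3, forall x y, r x y} ->
  sorted r (s1 ++ s2 ++ s3).
Proof.
move=> r_trans; rewrite !(sorted_pairwise r_trans) => p1 p2 p3 r12 r23 r13.
rewrite !pairwise_cat p1 p2 p3 (allrel_catr r) !andbT.
by apply/and3P; split => //; [apply/andP; split|]; apply/allrelP.
Qed.

Lemma stack_queue_congruence (ms ks mq : seq rat) (pi1 pi2 sig : shifting) :
  sorted <%R ms -> sorted <%R ks -> sorted <%R mq ->
  {in ms & mq, forall x y, x < y} ->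
  {in ms & ks, forall x k, pi1 x < k /\ pi2 x < sig k} ->
  {in ks & mq, forall k y, k < pi1 y /\ sig k < pi2 y} ->
  exists rho : shifting,
    {in ks, rho =1 sig} /\ {in ms ++ mq, forall x, rho (pi1 x) = pi2 x}.
Proof.
move=> s_ms s_ks s_mq lt_ms_mq lt_ms_ks lt_ks_mq.
set pi12 := fun x => (pi1 x, pi2 x).
pose pts := map pi12 ms ++ map (fun k => (k, sig k)) ks ++ map pi12 mq.
have sorted_pts : sorted lt2 pts.
  apply: sorted_cat3 lt2_trans _ _ _ _ _ _;
    try (apply: sorted_lt2_pairs => //; exact: shf_incr).
  - by move=> _ _ /mapP[x xs ->] /mapP[k kk ->]; apply/andP; apply: lt_ms_ks.
  - by move=> _ _ /mapP[k kk ->] /mapP[y ys ->]; apply/andP; apply: lt_ks_mq.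
  - by move=> _ _ /mapP[x xs ->] /mapP[y ys ->]; rewrite /lt2 /= !shf_incr ?lt_ms_mq.
have [rho Hrho] := shifting_interpolates sorted_pts.
exists rho; split => [k kk | x].
  by apply: (Hrho (k, sig k)); rewrite !mem_cat map_f ?orbT.
rewrite mem_cat => /orP[xs | xs]; apply: (Hrho (pi12 x));
  by rewrite !mem_cat (map_f pi12 xs) ?orbT.
Qed.

Lemma prios_gsubst s G : prios (gsubst s G) = prios G.
Proof. by rewrite /prios /gsubst -map_comp. Qed.

Lemma prios_gshift (pi : shifting) G : prios (gshift pi G) = map pi (prios G).
Proof. by rewrite /prios /gshift -!map_comp. Qed.

Lemma prios_cat F G : prios (F ++ G) = prios F ++ prios G.
Proof. by rewrite /prios map_cat. Qed.

Lemma perm_prios_pplus F G : perm_eq (prios (pplus F G)) (prios F ++ prios G).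
Proof.
have -> : prios (pplus F G) = sort <=%R (prios (F ++ G)) by rewrite /prios sort_map.
by rewrite perm_sort prios_cat.
Qed.

Lemma sorted_prios (G : pgoal) : pgoal_wf G -> sorted <%R (prios G).
Proof. by rewrite /pgoal_wf /prios sorted_map. Qed.

(* Atoms carry no decidable equality, so [eq_in_map] does not apply here. *)
Lemma map_prio_eq_in (f g : rat -> rat) (G : pgoal) : {in prios G, f =1 g} ->
  map (fun p : patom => (p.1, f p.2)) G = map (fun p : patom => (p.1, g p.2)) G.
Proof.
elim: G => //= p G IH fg; rewrite (fg p.2 (mem_head _ _)) IH // => x xG.
by apply: fg; rewrite inE xG orbT.
Qed.

Lemma incr_agree_on_sorted (L1 L2 ps : seq rat) (f g : rat -> rat) :
  sorted <%R ps -> {homo f : x y / x < y} -> {homo g : x y / x < y} ->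
  perm_eq L1 L2 -> perm_eq (L1 ++ map f ps) (L2 ++ map g ps) -> {in ps, f =1 g}.
Proof.
move=> s_ps f_incr g_incr perm12 perm_fg.
have : perm_eq (L1 ++ map f ps) (L1 ++ map g ps).
  by apply: perm_trans perm_fg _; rewrite perm_cat2r perm_sym.
rewrite perm_cat2l => /perm_mem same_mem.
apply/eq_in_map; apply: (irr_sorted_eq lt_trans ltxx) => //;
  by rewrite sorted_map; apply: sub_sorted s_ps.
Qed.

(* The step's shifting agrees with [gam] on the body's priorities, so it
   inherits the ordering [Msg | K | Mqg]. *)
Lemma stack_queue_interleaving (Ms Mq L K : pgoal) (Ds : step) (gam : shifting) :
  let B := Ms ++ Mq in let pi := s_shift Ds in
  let Msg := gshift gam (gsubst (s_ren Ds) Ms) in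
  let Mqg := gshift gam (gsubst (s_ren Ds) Mq) in
  pgoal_wf B -> perm_eq (prios L) (prios K) ->
  s_res Ds = gsubst (s_mgu Ds) (pplus L (gshift pi (gsubst (s_ren Ds) B))) ->
  s_res Ds = gsubst (s_mgu Ds) (Msg ++ K ++ Mqg) ->
  pbar_ok Msg K -> pbar_ok K Mqg ->
  {in prios Ms & prios K, forall x k, pi x < k} /\
  {in prios K & prios Mq, forall k y, k < pi y}.
Proof.
move=> B pi Msg Mqg wf_B perm_LK res_pplus res_sq lt_Ms_K lt_K_Mq.
have pi_gam : {in prios B, pi =1 gam}.
  apply: (incr_agree_on_sorted (sorted_prios wf_B) (@shf_incr _) (@shf_incr _)
    perm_LK).
  have := perm_prios_pplus L (gshift pi (gsubst (s_ren Ds) B)).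
  rewrite -(prios_gsubst (s_mgu Ds)) -res_pplus res_sq prios_gsubst.
  rewrite /B !prios_cat !prios_gshift !prios_gsubst prios_cat perm_sym.
  move=> /perm_trans; apply.
  by rewrite map_cat perm_catCA.
have mem_Msg x : x \in prios Ms -> pi x \in prios Msg.
  move=> xs; rewrite pi_gam ?prios_cat ?mem_cat ?xs //.
  by rewrite prios_gshift prios_gsubst map_f.
have mem_Mqg y : y \in prios Mq -> pi y \in prios Mqg.
  move=> ys; rewrite pi_gam ?prios_cat ?mem_cat ?ys ?orbT //.
  by rewrite prios_gshift prios_gsubst map_f.
by split=> [x k xs kK | k y kK ys]; [apply: lt_Ms_K | apply: lt_K_Mq]; auto.
Qed.

Lemma stack_queue_specialisation_independent (SQ : step -> Prop) :
  stack_queue_type SQ -> specialisation_independent SQ.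
Proof.
move=> [_ SQshape] Ds1 Ds2 X SQ1 SQ2 [lam [sig [a [K low]]]].
exists lam, sig, a, K; split => //.
case: (low) => [step1 [_ [clause2 [goal1 [_ [_ [goal2 [res1 res2]]]]]]]].
have [Ms [Mq [lt_Ms_Mq [EB SQc]]]] := SQshape (s_clause Ds1).
have [gam1 /= [lt1_Ms_K [lt1_K_Mq [_ sq1]]]] := SQc Ds1 SQ1 erefl a K goal1.
have [gam2 /= [lt2_Ms_K [lt2_K_Mq [_ sq2]]]] := SQc Ds2 SQ2 clause2 _ _ goal2.
rewrite EB in res1 res2.
have wf_B : pgoal_wf (Ms ++ Mq) by rewrite -EB; apply: cbody_wf.
have [sorted_Ms sorted_Mq] : sorted <%R (prios Ms) /\ sorted <%R (prios Mq).
  by move: (sorted_prios wf_B); rewrite prios_cat => /cat_sorted2[].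
have sorted_K : sorted <%R (prios K).
  by case: step1 => + _; rewrite goal1 => /sorted_prios /path_sorted.
have [int1_Ms int1_Mq] := stack_queue_interleaving wf_B (perm_refl _) res1 sq1
  lt1_Ms_K lt1_K_Mq.
set Kls := gshift sig (gsubst lam K) in res2 sq2 lt2_Ms_K lt2_K_Mq.
have perm_XK : perm_eq (prios (pplus X Kls)) (prios (pplus Kls X)).
  rewrite (permPl (perm_prios_pplus _ _)) (permPr (perm_prios_pplus _ _)).
  by rewrite perm_catC.
have [int2_Ms int2_Mq] := stack_queue_interleaving wf_B perm_XK res2 sq2
  lt2_Ms_K lt2_K_Mq.
have sig_K k : k \in prios K -> sig k \in prios (pplus Kls X).
  move=> kK; rewrite (perm_mem (perm_prios_pplus Kls X)) mem_cat.
  by rewrite /Kls prios_gshift prios_gsubst map_f.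
have [rho [rho_K rho_B]] := stack_queue_congruence
  (pi1 := s_shift Ds1) (pi2 := s_shift Ds2) (sig := sig)
  sorted_Ms sorted_K sorted_Mq lt_Ms_Mq
  (fun x k xs kK => conj (int1_Ms x k xs kK) (int2_Ms x _ xs (sig_K k kK)))
  (fun k y kK ys => conj (int1_Mq k y kK ys) (int2_Mq _ y (sig_K k kK) ys)).
exists rho; split; first exact: map_prio_eq_in.
rewrite EB /gshift -map_comp; apply: (map_prio_eq_in (f := rho \o s_shift Ds1)).
by move=> x xB; apply: rho_B; rewrite -prios_cat.
Qed.

Theorem mainTheorem10 (SQ : step -> Prop) :
  stack_queue_type SQ ->
  specialisation_independent SQ /\
  (complete SQ -> spec_indep_scheduling_rule SQ).
Proof.
move=> /stack_queue_specialisation_independent SI.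
by split => // complete_SQ; split.
Qed.
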